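(* Let $(M,f,g)$ be an $(m,n)$-hypermodule over a commutative Krasner $(m,n)$-hyperring $(R,f',g')$ with scalar identity $1$, let $N\subseteq Q$ be proper subhypermodules of $M$, and let $\phi:\mathcal{SH}(M)\to\mathcal{SH}(M)\cup\{\varnothing\}$ be a function. If $Q$ is an $n$-ary $\phi$-classical prime subhypermodule of $M$, then $Q/N$ is an $n$-ary $\phi_N$-classical prime subhypermodule of $M/N$.
   Context: A commutative Krasner $(m,n)$-hyperring with scalar identity $1$ is a triple $(R,f',g')$ where $(R,f')$ is a canonical $m$-ary hypergroup with zero $0$, $(R,g')$ is a commutative $n$-ary semigroup, $g'$ is distributive over $f'$, $0$ is a zero element for $g'$, and $g'(x,1^{(n-1)})=x$. Notation: $x_i^j$ denotes $x_i,\dots,x_j$ and $x^{(k)}$ denotes $x$ repeated $k$ times. An $(m,n)$-hypermodule over $R$ is a triple $(M,f,g)$ with $(M,f)$ a canonical $m$-ary hypergroup with zero $0$ and $g:R^{n-1}\times M\to P^*(M)$ satisfying: $g(r_1^{n-1},f(x_1^m))=f(g(r_1^{n-1},x_1),\dots,g(r_1^{n-1},x_m))$; $g(r_1^{i-1},f'(s_1^m),r_{i+1}^{n-1},x)=f(g(r_1^{i-1},s_1,r_{i+1}^{n-1},x),\dots,g(r_1^{i-1},s_m,r_{i+1}^{n-1},x))$; $g(r_1^{i-1},g'(r_i^{i+n-1}),r_{i+n}^{2n-2},x)=g(r_1^{n-1},g(r_n^{2n-2},x))$; $g(r_1^{i-1},0,r_{i+1}^{n-1},x)=\{0\}$; moreover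 $g(1^{(n-1)},a)=\{a\}$. Operations on subsets are unions over elements. A subhypermodule is a nonempty $N\subseteq M$ with $(N,f)$ an $m$-ary subhypergroup and $g(R^{(n-1)},N)\subseteq N$; $\mathcal{SH}(M)$ denotes the set of subhypermodules of $M$. Given $\phi:\mathcal{SH}(M)\to\mathcal{SH}(M)\cup\{\varnothing\}$, a proper subhypermodule $Q$ is $n$-ary $\phi$-classical prime if for $r_1^{n-1}\in R$, $a\in M$, $g(r_1^{n-1},a)\subseteq Q\setminus\phi(Q)$ implies $g(r_i,1^{(n-2)},a)\subseteq Q$ for some $1\le i\le n-1$ (the same definition applies to any $(m,n)$-hypermodule and function on its subhypermodules). The quotient $M/N=\{f(a,N,0^{(m-2)}):a\in M\}$ is an $(m,n)$-hypermodule with $F(f(a_1,N,0^{(m-2)}),\dots,f(a_m,N,0^{(m-2)}))=\{f(t,N,0^{(m-2)}):t\in f(a_1^m)\}$ and $G(r_1^{n-1},f(a,N,0^{(m-2)}))=\{f(z,N,0^{(m-2)}):z\in g(r_1^{n-1},a)\}$; for a subhypermodule $K\supseteq N$, $K/N=\{f(a,N,0^{(m-2)}):a\in K\}$, and every subhypermodule of $M/N$ has this form. Define $\phi_N:\mathcal{SH}(M/N)\to\mathcal{SH}(M/N)\cup\{\varnothing\}$ by $\phi_N(K/N)=f(\phi(K),N,0^{(m-2)})/N$ for subhypermodules $K\supseteq N$, and $\phi_N(K/N)=\varnothing$ if $\phi(K)=\varnothing$. *)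

From mathcomp Require Import all_boot.
From Stdlib Require List Permutation.

Set Implicit Arguments.
Unset Strict Implicit.
Unset Printing Implicit Defensive.

Definition hset (T : Type) := T -> Prop.
Definition eqs {T : Type} (a : T) : hset T := fun x => x = a.
Definition setAll {T : Type} : hset T := fun _ => True.
Definition hsubset {T : Type} (A B : hset T) := forall x, A x -> B x.
Definition hseteq {T : Type} (A B : hset T) := forall x, A x <-> B x.
Definition hsetD {T : Type} (A B : hset T) : hset T := fun x => A x /\ ~ B x.
Definition bigcup {A B : Type} (P : hset A) (F : A -> hset B) : hset B :=
  fun z => exists a, P a /\ F a z.

(* A hyperoperation of (intended) arity k: takes the list of its k arguments. *)
Definition hop (T : Type) := seq T -> hset T.

Definition lift {T : Type} (f : hop T) (As : seq (hset T)) : hset T :=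
  fun z => exists xs, List.Forall2 (fun x A => A x) xs As /\ f xs z.

Record canonical_hypergroup (T : Type) (m : nat) (f : hop T) (e : T) (neg : T -> T)
  : Prop := {
  ch_nonempty : forall xs, size xs = m -> exists z, f xs z;
  (* associativity: f(x_1^{i-1}, f(x_i^{m+i-1}), x_{m+i}^{2m-1}) independent of i *)
  ch_assoc : forall xs i, size xs = (2 * m - 1)%N -> (i < m)%N ->
    hseteq (lift f (map eqs (take i xs) ++ f (take m (drop i xs)) :: map eqs (drop (i + m) xs)))
           (lift f (f (take m xs) :: map eqs (drop m xs)));
  (* reproductivity: f(x_1^{i-1}, H, x_{i+1}^m) = H *)
  ch_reprod : forall xs i, size xs = m -> (i < m)%N ->
    hseteq (lift f (set_nth setAll (map eqs xs) i setAll)) setAll;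
  ch_comm : forall xs ys, size xs = m -> Permutation.Permutation xs ys -> hseteq (f xs) (f ys);
  ch_ident : forall x, hseteq (f (x :: nseq m.-1 e)) (eqs x);
  ch_ident_uniq : forall e', (forall x, hseteq (f (x :: nseq m.-1 e')) (eqs x)) -> e' = e;
  ch_inv : forall x, f (x :: neg x :: nseq (m - 2) e) e;
  ch_inv_uniq : forall x y, f (x :: y :: nseq (m - 2) e) e -> y = neg x;
  (* reversibility: x in f(x_1^m) implies x_i in f(-x_1,...,-x_{i-1},x,-x_{i+1},...,-x_m) *)
  ch_rev : forall xs x i, size xs = m -> f xs x -> (i < m)%N ->
    f (set_nth x (map neg xs) i x) (nth x xs i)
}.

Record krasner_hyperring (R : Type) (m n : nat) (f' : hop R) (g' : seq R -> R)
  (zero : R) (neg : R -> R) (one : R) : Prop := {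
  kr_add : canonical_hypergroup m f' zero neg;
  kr_mul_assoc : forall xs i, size xs = (2 * n - 1)%N -> (i < n)%N ->
    g' (take i xs ++ g' (take n (drop i xs)) :: drop (i + n) xs)
    = g' (g' (take n xs) :: drop n xs);
  kr_mul_comm : forall xs ys, size xs = n -> Permutation.Permutation xs ys -> g' xs = g' ys;
  kr_distr : forall xs ys i, size xs = n -> size ys = m -> (i < n)%N ->
    hseteq (bigcup (f' ys) (fun y => eqs (g' (set_nth zero xs i y))))
           (lift f' (map (fun y => eqs (g' (set_nth zero xs i y))) ys));
  kr_zero : forall xs i, size xs = n -> (i < n)%N -> g' (set_nth zero xs i zero) = zero;
  kr_one : forall x, g' (x :: nseq n.-1 one) = x
}.

Record hypermodule (R M : Type) (m n : nat) (f' : hop R) (g' : seq R -> R)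
  (zeroR one : R) (f : hop M) (g : seq R -> M -> hset M) (zero : M) (neg : M -> M)
  : Prop := {
  hm_add : canonical_hypergroup m f zero neg;
  hm_nonempty : forall rs x, size rs = n.-1 -> exists z, g rs x z;
  hm_ax1 : forall rs xs, size rs = n.-1 -> size xs = m ->
    hseteq (bigcup (f xs) (g rs)) (lift f (map (g rs) xs));
  hm_ax2 : forall rs ss i x, size rs = n.-1 -> size ss = m -> (i < n.-1)%N ->
    hseteq (bigcup (f' ss) (fun s => g (set_nth zeroR rs i s) x))
           (lift f (map (fun s => g (set_nth zeroR rs i s) x) ss));
  hm_ax3 : forall rs i x, size rs = (2 * n - 2)%N -> (i < n.-1)%N ->
    hseteq (g (take i rs ++ g' (take n (drop i rs)) :: drop (i + n) rs) x)
           (bigcup (g (drop n.-1 rs) x) (g (take n.-1 rs)));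
  hm_ax4 : forall rs i x, size rs = n.-1 -> (i < n.-1)%N ->
    hseteq (g (set_nth zeroR rs i zeroR) x) (eqs zero);
  hm_one : forall a, hseteq (g (nseq n.-1 one) a) (eqs a)
}.

Definition subhypergroup (T : Type) (m : nat) (f : hop T) (S : hset T) : Prop :=
  (exists x, S x) /\
  (forall xs, size xs = m -> List.Forall S xs -> hsubset (f xs) S) /\
  (forall xs i, size xs = m -> (i < m)%N -> List.Forall S xs ->
     hseteq (lift f (set_nth S (map eqs xs) i S)) S).

Definition subhypermodule (R X : Type) (m n : nat) (f : hop X) (g : seq R -> X -> hset X)
  (S : hset X) : Prop :=
  subhypergroup m f S /\
  (forall rs x, size rs = n.-1 -> S x -> hsubset (g rs x) S).

Definition proper_set {T : Type} (S : hset T) : Prop := exists x, ~ S x.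

Definition phi_classical_prime (R X : Type) (m n : nat) (one : R) (f : hop X)
  (g : seq R -> X -> hset X) (phi : hset X -> hset X) (Q : hset X) : Prop :=
  subhypermodule m n f g Q /\ proper_set Q /\
  forall rs a, size rs = n.-1 ->
    hsubset (g rs a) (hsetD Q (phi Q)) ->
    exists i, (i < n.-1)%N /\ hsubset (g (nth one rs i :: nseq (n - 2) one) a) Q.

Section Quotient.
Variables (R M : Type) (m : nat) (f : hop M) (g : seq R -> M -> hset M) (zero : M)
  (N : hset M).

Definition coset (a : M) : hset M := lift f (eqs a :: N :: nseq (m - 2) (eqs zero)).

Definition QElt : Type := {S : hset M | exists a, S = coset a}.

Definition quotF : hop QElt := fun Cs D =>
  exists as_, List.Forall2 (fun a (C : QElt) => sval C = coset a) as_ Cs /\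
  exists t, f as_ t /\ sval D = coset t.

Definition quotG : seq R -> QElt -> hset QElt := fun rs C D =>
  exists a, sval C = coset a /\ exists z, g rs a z /\ sval D = coset z.

Definition quot_set (K : hset M) : hset QElt := fun C => exists a, K a /\ sval C = coset a.

Definition quot_preim (S : hset QElt) : hset M := fun a => exists C, S C /\ sval C = coset a.

(* phi_N(K/N) = f(phi(K), N, 0^(m-2))/N  (empty when phi(K) is empty) *)
Definition phiN (phi : hset M -> hset M) (S : hset QElt) : hset QElt :=
  quot_set (lift f (phi (quot_preim S) :: N :: nseq (m - 2) (eqs zero))).
End Quotient.
Arguments coset {M} m f zero N a _.
Arguments QElt {M} m f zero N.
Arguments quotF {M} m f zero N _ _.
Arguments quotG {R M} m f g zero N _ _ _.
Arguments quot_set {M} m f zero N K _.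
Arguments quot_preim {M} m f zero N S _.
Arguments phiN {M} m f zero N phi S _.

(* Since N is contained in Q and Q is closed under f, the coset f(a, N, 0, ..., 0) of any
   a in Q lies in Q.  Hence a coset belongs to Q/N exactly when its representative belongs
   to Q, the union of the cosets in Q/N is Q itself, and phi_N(Q/N) contains the coset of
   every element of phi(Q).  The hypothesis G(r, a + N) in Q/N \ phi_N(Q/N) therefore pulls
   back to g(r, a) in Q \ phi(Q), primeness of Q yields g(r_i, 1, ..., 1, a) in Q, and the
   distributivity of g over f carries this inclusion to every element of the coset a + N. *)

From mathcomp Require Import all_boot zify.
From Stdlib Require Import ProofIrrelevance FunctionalExtensionality PropExtensionality.

Set Implicit Arguments.
Unset Strict Implicit.

Local Notation members xs As := (List.Forall2 (fun x A => A x) xs As).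

Lemma Forall2_size (A B : Type) (r : A -> B -> Prop) xs ys :
  List.Forall2 r xs ys -> size xs = size ys.
Proof. by elim=> //= x y {}xs {}ys _ _ ->. Qed.

Lemma Forall2_Forall_l (A B : Type) (r : A -> B -> Prop) (P : B -> Prop) (P' : A -> Prop) xs ys :
  (forall x y, r x y -> P y -> P' x) ->
  List.Forall2 r xs ys -> List.Forall P ys -> List.Forall P' xs.
Proof.
move=> rP; elim=> // x y {}xs {}ys rxy _ IH /List.Forall_cons_iff [Py Pys].
by constructor; [exact: rP rxy Py | exact: IH].
Qed.

Lemma members_Forall (T : Type) (P : hset T) xs As :
  members xs As -> List.Forall (fun A => hsubset A P) As -> List.Forall P xs.
Proof. by apply: Forall2_Forall_l => x A Ax; apply. Qed.

Lemma members_nseq (T : Type) (S : hset T) k x : S x -> members (nseq k x) (nseq k S).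
Proof. by move=> Sx; elim: k => [|k IH] /=; constructor. Qed.

Lemma Forall_nseq (T : Type) (P : T -> Prop) k x : P x -> List.Forall P (nseq k x).
Proof. by move=> Px; elim: k => [|k IH] /=; constructor. Qed.

Lemma Forall_set_nth (T : Type) (P : T -> Prop) (s : seq T) x0 i x :
  P x0 -> P x -> List.Forall P s -> List.Forall P (set_nth x0 s i x).
Proof.
move=> Px0 Px Ps; elim: Ps i => [|y {}s Py Ps IH] [|i] /=; try by constructor.
by constructor=> //; elim: i => [|i IH] /=; constructor.
Qed.

Lemma Forall_map_eqs (T : Type) (P : hset T) xs :
  List.Forall P xs -> List.Forall (fun A => hsubset A P) (map eqs xs).
Proof. by elim=> //= x {}xs Px _ IH; constructor=> // y ->. Qed.

Lemma members_map_eqs (T : Type) (xs ys : seq T) : members xs (map eqs ys) <-> xs = ys.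
Proof.
split=> [|->]; last by elim: ys => //= y ys IH; constructor.
elim: ys xs => [|y ys IH] xs H; inversion H as [|x ? xs' ? xy H']; subst => //.
by rewrite xy (IH _ H').
Qed.

Lemma members_set_nth_map (A B : Type) (h : A -> B) (P : hset A) (P' : hset B) xs zs i :
  (i < size xs)%N -> (forall z, P z -> P' (h z)) ->
  members zs (set_nth P (map eqs xs) i P) ->
  members (map h zs) (set_nth P' (map eqs (map h xs)) i P').
Proof.
move=> + hP; elim: xs i zs => [|x xs IH] [|i] zs //= ltixs H.
all: inversion H as [|z ? zs' ? Pz H']; subst; constructor.
- exact: hP.
- by move/members_map_eqs: H' => ->; apply/members_map_eqs.
- by rewrite Pz.
- exact: IH.
Qed.

Section Cosets.

Variables (T : Type) (m : nat) (f : hop T) (e : T) (neg : T -> T).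
Hypotheses (Hm : (1 < m)%N) (Hf : canonical_hypergroup m f e neg).
Variable N : hset T.

Lemma lift_closed (K : hset T) As :
  (forall xs, size xs = m -> List.Forall K xs -> hsubset (f xs) K) ->
  size As = m -> List.Forall (fun A => hsubset A K) As -> hsubset (lift f As) K.
Proof.
move=> Kf sizeAs AsK z [xs [xsAs fxs]].
by apply: (Kf xs) fxs; [rewrite (Forall2_size xsAs) | exact: members_Forall xsAs AsK].
Qed.

Lemma lift_coset_mem (S : hset T) a :
  N e -> S a -> lift f (S :: N :: nseq (m - 2) (eqs e)) a.
Proof.
move=> Ne Sa; exists (a :: nseq m.-1 e); split; last exact/(ch_ident Hf).
have -> : m.-1 = (m - 2).+1 by lia.
by do 2!constructor=> //; apply: members_nseq.
Qed.

Lemma coset_self a : N e -> coset m f e N a a.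
Proof. by move=> Ne; apply: lift_coset_mem. Qed.

Lemma coset_sub (K : hset T) a :
  (forall xs, size xs = m -> List.Forall K xs -> hsubset (f xs) K) ->
  K e -> hsubset N K -> K a -> hsubset (coset m f e N a) K.
Proof.
move=> Kf Ke NK Ka; apply: lift_closed => //=; first by rewrite size_nseq; lia.
constructor; first by move=> _ ->.
by constructor=> //; apply: Forall_nseq => _ ->.
Qed.

End Cosets.

Section Hypermodule.

Variables (R M : Type) (m n : nat) (f' : hop R) (g' : seq R -> R) (zeroR oneR : R).
Variables (f : hop M) (g : seq R -> M -> hset M) (zero : M) (neg : M -> M).
Hypotheses (Hm : (1 < m)%N) (Hn : (1 < n)%N).
Hypothesis HM : hypermodule m n f' g' zeroR oneR f g zero neg.

Lemma subhypermodule_zero (K : hset M) : subhypermodule m n f g K -> K zero.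
Proof.
move=> [[[x Kx] _] Kg].
have [k nk] : exists k, n.-1 = k.+1 by exists n.-2; case: (n) Hn => [|[|]].
have sizek : size (nseq k.+1 zeroR) = n.-1 by rewrite size_nseq.
by apply: (Kg _ x sizek Kx); apply/(hm_ax4 HM (i := 0) x sizek); rewrite ?nk.
Qed.

Lemma subhypermodule_coset_sub (K N : hset M) a :
  subhypermodule m n f g K -> hsubset N K -> K a -> hsubset (coset m f zero N a) K.
Proof.
move=> HK NK Ka; have [[_ [Kf _]] _] := HK.
exact (coset_sub Hm Kf (subhypermodule_zero HK) NK Ka).
Qed.

Lemma subhypermodule_g_coset_sub (Q N : hset M) s a a' :
  subhypermodule m n f g Q -> hsubset N Q -> size s = n.-1 ->
  hsubset (g s a) Q -> coset m f zero N a a' -> hsubset (g s a') Q.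
Proof.
move=> HQ NQ sizes gsaQ [xs [xsAs fxs]] z gsz; have [[_ [Qf _]] Qg] := HQ.
have sizexs : size xs = m by rewrite (Forall2_size xsAs) /= size_nseq; lia.
have liftz : lift f (map (g s) xs) z by apply/(hm_ax1 HM sizes sizexs z); exists a'.
apply: (lift_closed Qf _ _ liftz); first by rewrite size_map.
have xsQ : List.Forall (fun x => x = a \/ Q x) xs.
  apply: (members_Forall xsAs); constructor; first by move=> _ ->; left.
  constructor; first by move=> y /NQ; right.
  by apply: Forall_nseq => _ ->; right; apply: subhypermodule_zero.
apply/List.Forall_map; apply: List.Forall_impl xsQ => x [-> //|Qx].
exact: Qg.
Qed.

End Hypermodule.

Section Quotient.

Variables (R M : Type) (m n : nat) (f' : hop R) (g' : seq R -> R) (zeroR oneR : R).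
Variables (f : hop M) (g : seq R -> M -> hset M) (zero : M) (neg : M -> M).
Hypotheses (Hm : (1 < m)%N) (Hn : (1 < n)%N).
Hypothesis HM : hypermodule m n f' g' zeroR oneR f g zero neg.
Variables N Q : hset M.
Hypotheses (HN : subhypermodule m n f g N) (HQ : subhypermodule m n f g Q) (NQ : hsubset N Q).

Local Notation Q_N := (quot_set m f zero N Q).

Let N_zero : N zero := subhypermodule_zero Hn HM HN.
Let coset_selfN a : coset m f zero N a a := coset_self Hm (hm_add HM) a N_zero.

Definition qcoset (a : M) : QElt m f zero N :=
  exist _ (coset m f zero N a) (ex_intro _ a erefl).

Lemma QElt_eq_qcoset (C : QElt m f zero N) a : sval C = coset m f zero N a -> C = qcoset a.
Proof. by case: C => S p /= E; subst; congr exist; apply: proof_irrelevance. Qed.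

Lemma quot_set_coset (C : QElt m f zero N) a : Q_N C -> sval C = coset m f zero N a -> Q a.
Proof.
move=> [b [Qb Cb]] Ca; apply: (subhypermodule_coset_sub Hm Hn HM HQ NQ Qb).
by rewrite -Cb Ca; apply: coset_selfN.
Qed.

Lemma quot_set_qcoset a : Q_N (qcoset a) <-> Q a.
Proof. by split=> [/quot_set_coset|Qa]; [apply | exists a]. Qed.

Lemma quot_preim_quot_set : quot_preim m f zero N Q_N = Q.
Proof.
apply: functional_extensionality => y; apply: propositional_extensionality; split.
  by move=> [C [CQ Cy]]; apply: quot_set_coset CQ Cy.
by move=> Qy; exists (qcoset y); split=> //; apply/quot_set_qcoset.
Qed.

Lemma quot_set_reps xs : List.Forall Q_N xs -> exists as_, List.Forall Q as_ /\ xs = map qcoset as_.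
Proof.
elim=> [|C {}xs [b [Qb Cb]] _ [as_ [Qas ->]]]; first by exists [::].
by exists (b :: as_); split; [constructor | rewrite (QElt_eq_qcoset Cb)].
Qed.

Lemma quotF_qcoset zs d : f zs d -> quotF m f zero N (map qcoset zs) (qcoset d).
Proof. by move=> fzs; exists zs; split; [elim: zs {fzs} => //= z zs IH; constructor | exists d]. Qed.

Lemma quotF_closed xs :
  size xs = m -> List.Forall Q_N xs -> hsubset (quotF m f zero N xs) Q_N.
Proof.
move=> sizexs xsQ D [as_ [asxs [t [fas Dt]]]]; exists t; split=> //.
have [[_ [Qf _]] _] := HQ; apply: (Qf as_) fas; first by rewrite (Forall2_size asxs).
by apply: Forall2_Forall_l asxs xsQ => a C Ca CQ; apply: quot_set_coset CQ Ca.
Qed.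

Lemma quot_set_subhypermodule :
  subhypermodule m n (quotF m f zero N) (quotG m f g zero N) Q_N.
Proof.
have [[_ [_ Qreprod]] Qg] := HQ.
split; [split; [|split]|].
- by exists (qcoset zero); apply/quot_set_qcoset; exact (subhypermodule_zero Hn HM HQ).
- exact: quotF_closed.
- move=> xs i sizexs ltim xsQ D; split.
    move=> liftD; apply: (lift_closed quotF_closed _ _ liftD).
      by rewrite size_set_nth size_map; lia.
    by apply: Forall_set_nth => //; apply: Forall_map_eqs.
  move=> [d [Qd Dd]]; rewrite (QElt_eq_qcoset Dd).
  have [as_ [Qas xs_as]] := quot_set_reps xsQ.
  have sizeas : size as_ = m by rewrite -sizexs xs_as size_map.
  have [_ /(_ Qd) [zs [zsas fzs]]] := Qreprod as_ i sizeas ltim Qas d.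
  exists (map qcoset zs); split; last exact: quotF_qcoset.
  rewrite xs_as; apply: members_set_nth_map zsas; first by rewrite sizeas.
  by move=> z Qz; apply/quot_set_qcoset.
- move=> rs C sizers CQ D [a [Ca [z [gz Dz]]]]; exists z; split=> //.
  exact: Qg rs a sizers (quot_set_coset CQ Ca) z gz.
Qed.

Lemma quot_set_proper : proper_set Q -> proper_set Q_N.
Proof. by move=> [x Qx]; exists (qcoset x); move/quot_set_qcoset. Qed.

Lemma phiN_qcoset phi z : phi Q z -> phiN m f zero N phi Q_N (qcoset z).
Proof.
rewrite /phiN quot_preim_quot_set => phiz; exists z; split=> //.
exact: (lift_coset_mem Hm (hm_add HM) N_zero phiz).
Qed.

Lemma quotG_qcoset_sub_reflect phi rs a :
  hsubset (quotG m f g zero N rs (qcoset a)) (hsetD Q_N (phiN m f zero N phi Q_N)) ->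
  hsubset (g rs a) (hsetD Q (phi Q)).
Proof.
move=> sub z gz; have [|/quot_set_qcoset Qz nphiz] := sub (qcoset z).
  by exists a; split=> //; exists z.
by split=> // /phiN_qcoset.
Qed.

Lemma quotG_qcoset_sub s a :
  size s = n.-1 -> hsubset (g s a) Q -> hsubset (quotG m f g zero N s (qcoset a)) Q_N.
Proof.
move=> sizes gQ D [a' [/= aa' [z [gz Dz]]]]; exists z; split=> //.
have a'_in : coset m f zero N a a' by rewrite aa'; apply: coset_selfN.
exact: (subhypermodule_g_coset_sub Hm Hn HM HQ NQ sizes gQ a'_in gz).
Qed.

End Quotient.

Theorem mainTheorem10 (R M : Type) (m n : nat)
  (f' : hop R) (g' : seq R -> R) (zeroR oneR : R) (negR : R -> R)
  (f : hop M) (g : seq R -> M -> hset M) (zeroM : M) (negM : M -> M)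
  (Hm : (2 <= m)%N) (Hn : (2 <= n)%N)
  (HR : krasner_hyperring m n f' g' zeroR negR oneR)
  (HM : hypermodule m n f' g' zeroR oneR f g zeroM negM)
  (phi : hset M -> hset M)
  (Hphi : forall K, subhypermodule m n f g K ->
            subhypermodule m n f g (phi K) \/ (forall x, ~ phi K x))
  (N Q : hset M)
  (HN : subhypermodule m n f g N) (HNp : proper_set N)
  (HQ : subhypermodule m n f g Q) (HQp : proper_set Q)
  (HNQ : hsubset N Q)
  (Hprime : phi_classical_prime m n oneR f g phi Q) :
  phi_classical_prime m n oneR
    (quotF m f zeroM N) (quotG m f g zeroM N)
    (phiN m f zeroM N phi) (quot_set m f zeroM N Q).
Proof.
have [_ [_ Qprime]] := Hprime.
split; first exact: (quot_set_subhypermodule Hm Hn HM HN HQ HNQ).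
split; first exact: (quot_set_proper Hm Hn HM HN HQ HNQ).
move=> rs C sizers CQ; have [a Ca] := svalP C; rewrite (QElt_eq_qcoset Ca) in CQ *.
have [i [ltin gQ]] := Qprime rs a sizers (quotG_qcoset_sub_reflect Hm Hn HM HN HQ HNQ CQ).
exists i; split=> //; apply: (quotG_qcoset_sub Hm Hn HM HN HQ HNQ _ gQ).
by rewrite /= size_nseq; lia.
Qed.
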